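(* Let $(X,d)$ be a complete generalized metric space and let $T,S:X\to X$ be mappings such that $T$ is continuous, one-to-one and subsequentially convergent. Suppose there is $\lambda\in[0,\tfrac12)$ such that \[ d(TSx,TSy)\le \lambda\big[d(Tx,TSx)+d(Ty,TSy)\big] \] for all $x,y\in X$. Then $S$ has a unique fixed point. Moreover, if $T$ is sequentially convergent, then for every $x_0\in X$ the sequence of iterates $\{S^n x_0\}$ converges to this fixed point.
   Context: A generalized metric space (in the sense of Branciari) is a nonempty set $X$ with a map $d:X\times X\to\mathbb{R}$ such that: (i) $d(x,y)\ge 0$ for all $x,y\in X$, and $d(x,y)=0$ iff $x=y$; (ii) $d(x,y)=d(y,x)$ for all $x,y\in X$; (iii) (rectangular property) $d(x,y)\le d(x,w)+d(w,z)+d(z,y)$ for all $x,y\in X$ and all distinct points $w,z\in X\setminus\{x,y\}$. A sequence $\{x_n\}$ in $X$ converges to $x\in X$ if $d(x_n,x)\to 0$; it is Cauchy if $d(x_n,x_m)\to 0$ as $n,m\to\infty$; $(X,d)$ is complete if every Cauchy sequence converges. $T:X\to X$ is continuous if $x_n\to x$ implies $Tx_n\to Tx$. A mapping $T:X\to X$ is called sequentially convergent if for every sequence $\{y_n\}$ in $X$, convergence of $\{Ty_n\}$ implies convergence of $\{y_n\}$; $T$ is called subsequentially convergent if for every sequence $\{y_n\}$ in $X$, convergence of $\{Ty_n\}$ implies that $\{y_n\}$ has a convergent subsequence. *)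

From Stdlib Require Import Reals.
Open Scope R_scope.

Definition is_gen_metric {X : Type} (d : X -> X -> R) : Prop :=
  (forall x y, 0 <= d x y) /\
  (forall x y, d x y = 0 <-> x = y) /\
  (forall x y, d x y = d y x) /\
  (forall x y w z, w <> z -> w <> x -> w <> y -> z <> x -> z <> y ->
     d x y <= d x w + d w z + d z y).

Definition gm_converges_to {X : Type} (d : X -> X -> R) (u : nat -> X) (x : X) : Prop :=
  Un_cv (fun n => d (u n) x) 0.

Definition gm_convergent {X : Type} (d : X -> X -> R) (u : nat -> X) : Prop :=
  exists x, gm_converges_to d u x.

Definition gm_cauchy {X : Type} (d : X -> X -> R) (u : nat -> X) : Prop :=
  forall eps, eps > 0 -> exists N, forall n m, (n >= N)%nat -> (m >= N)%nat ->
    d (u n) (u m) < eps.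

Definition gm_complete {X : Type} (d : X -> X -> R) : Prop :=
  forall u, gm_cauchy d u -> gm_convergent d u.

Definition gm_continuous {X : Type} (d : X -> X -> R) (T : X -> X) : Prop :=
  forall u x, gm_converges_to d u x -> gm_converges_to d (fun n => T (u n)) (T x).

Definition seq_convergent_map {X : Type} (d : X -> X -> R) (T : X -> X) : Prop :=
  forall y : nat -> X, gm_convergent d (fun n => T (y n)) -> gm_convergent d y.

Definition subseq_convergent_map {X : Type} (d : X -> X -> R) (T : X -> X) : Prop :=
  forall y : nat -> X, gm_convergent d (fun n => T (y n)) ->
    exists phi : nat -> nat, (forall n m, (n < m)%nat -> (phi n < phi m)%nat) /\
      gm_convergent d (fun n => y (phi n)).

Fixpoint iter_map {X : Type} (S : X -> X) (n : nat) (x : X) : X :=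
  match n with O => x | Datatypes.S k => S (iter_map S k x) end.

(* Let y_n = T x_n along an orbit x_{n+1} = S x_n. The contraction condition gives
   d(y_{n+1}, y_{n+2}) <= lambda/(1-lambda) d(y_n, y_{n+1}), so the steps of (y_n) decay
   geometrically and d(y_{n+1}, y_{m+1}) <= lambda (step n + step m) makes (y_n) Cauchy.
   Unless the orbit hits a fixed point, the steps strictly decrease, so (y_n) is injective;
   for such sequences the rectangular inequality through two consecutive terms replaces the
   triangle inequality.  Completeness and subsequential convergence of T yield z with
   x_{phi n} -> z, and the rectangle T z, y_m, y_{m+1}, T S z forces d(T z, T S z) = 0.
   When T is sequentially convergent, (x_n) itself converges, and the rectangle argument
   again identifies its limit with the fixed point. *)
From Stdlib Require Import Reals.
From Stdlib Require Import Lra Lia Classical.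
Open Scope R_scope.

Lemma Un_cv_const (c : R) : Un_cv (fun _ => c) c.
Proof.
  intros e He; exists 0%nat; intros n _.
  unfold R_dist; rewrite Rminus_diag, Rabs_R0; lra.
Qed.

Lemma Un_cv_0_squeeze (u v : nat -> R) :
  (forall n, 0 <= u n <= v n) -> Un_cv v 0 -> Un_cv u 0.
Proof.
  intros Huv Hv e He; destruct (Hv e He) as [N HN]; exists N; intros n Hn.
  specialize (HN n Hn); specialize (Huv n); unfold R_dist in *.
  rewrite Rminus_0_r in *; rewrite Rabs_pos_eq in * by lra; lra.
Qed.

Lemma Rle_0_of_eventually_le_cv0 (c : R) (u : nat -> R) (N : nat) :
  (forall n, (n >= N)%nat -> c <= u n) -> Un_cv u 0 -> c <= 0.
Proof.
  intros Hle Hu; apply Rnot_lt_le; intro Hc.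
  destruct (Hu c Hc) as [M HM].
  specialize (HM (N + M)%nat ltac:(lia)); specialize (Hle (N + M)%nat ltac:(lia)).
  unfold R_dist in HM; rewrite Rminus_0_r in HM.
  pose proof (Rle_abs (u (N + M)%nat)); lra.
Qed.

Lemma Un_cv_geometric_decay (a : nat -> R) (k : R) :
  0 <= k < 1 -> (forall n, 0 <= a n) -> (forall n, a (S n) <= k * a n) -> Un_cv a 0.
Proof.
  intros Hk Ha Hstep.
  assert (Hbound : forall n, a n <= a 0%nat * k ^ n).
  { induction n as [|n IH]; simpl; [lra|].
    apply Rle_trans with (k * a n); [apply Hstep|].
    replace (a 0%nat * (k * k ^ n)) with (k * (a 0%nat * k ^ n)) by ring.
    apply Rmult_le_compat_l; lra. }
  assert (Hpow : Un_cv (fun n => k ^ n) 0).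
  { intros e He; destruct (pow_lt_1_zero k ltac:(rewrite Rabs_pos_eq; lra) e He) as [N HN].
    exists N; intros n Hn; unfold R_dist; rewrite Rminus_0_r; exact (HN n Hn). }
  apply (Un_cv_0_squeeze _ (fun n => a 0%nat * k ^ n)); [intro n; split; auto|].
  rewrite <- (Rmult_0_r (a 0%nat)).
  exact (CV_mult _ _ _ _ (Un_cv_const _) Hpow).
Qed.

Lemma strictly_increasing_ge_id (phi : nat -> nat) :
  (forall n m, (n < m)%nat -> (phi n < phi m)%nat) -> forall n, (n <= phi n)%nat.
Proof.
  intros Hphi n; induction n as [|n IH]; [lia|].
  specialize (Hphi n (S n) ltac:(lia)); lia.
Qed.

Lemma Un_cv_subseq (u : nat -> R) (phi : nat -> nat) (l : R) :
  (forall n m, (n < m)%nat -> (phi n < phi m)%nat) ->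
  Un_cv u l -> Un_cv (fun n => u (phi n)) l.
Proof.
  intros Hphi Hu e He; destruct (Hu e He) as [N HN]; exists N; intros n Hn.
  apply HN; pose proof (strictly_increasing_ge_id phi Hphi n); lia.
Qed.

Lemma strictly_decreasing_injective (a : nat -> R) :
  (forall n, a (S n) < a n) -> forall m n, a m = a n -> m = n.
Proof.
  intros Hdec.
  assert (Hlt : forall m n, (m < n)%nat -> a n < a m).
  { intros m n Hmn; induction Hmn as [|n _ IH]; [apply Hdec|].
    specialize (Hdec n); lra. }
  intros m n E; destruct (Nat.lt_trichotomy m n) as [H|[H|H]]; auto;
    apply Hlt in H; lra.
Qed.

Lemma injective_seq_eventually_neq {A : Type} (y : nat -> A) (p : A) :
  (forall m n, y m = y n -> m = n) -> exists N, forall n, (n >= N)%nat -> y n <> p.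
Proof.
  intros Hinj; destruct (classic (exists j, y j = p)) as [[j Hj]|Hnone].
  - exists (S j); intros n Hn E; assert (n = j) by (apply Hinj; congruence); lia.
  - exists 0%nat; intros n _ E; apply Hnone; eauto.
Qed.

Section GeneralizedMetric.

Context {X : Type} {d : X -> X -> R}.
Hypothesis Hd : is_gen_metric d.

Lemma gm_dist_ge0 (x y : X) : 0 <= d x y.
Proof. apply Hd. Qed.

Lemma gm_dist_refl (x : X) : d x x = 0.
Proof. apply Hd; reflexivity. Qed.

Lemma gm_dist_sym (x y : X) : d x y = d y x.
Proof. apply Hd. Qed.

Lemma gm_eq_of_dist_le0 (x y : X) : d x y <= 0 -> x = y.
Proof. intro H; apply Hd; pose proof (gm_dist_ge0 x y); lra. Qed.

Lemma gm_rectangle_eventually (y : nat -> X) (p q : X) :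
  (forall m n, y m = y n -> m = n) ->
  exists N, forall n, (n >= N)%nat ->
    d p q <= d (y n) p + d (y n) (y (S n)) + d (y (S n)) q.
Proof.
  intros Hinj.
  destruct (injective_seq_eventually_neq y p Hinj) as [Np HNp].
  destruct (injective_seq_eventually_neq y q Hinj) as [Nq HNq].
  exists (Nat.max Np Nq); intros n Hn.
  rewrite (gm_dist_sym (y n) p).
  destruct Hd as (_ & _ & _ & Hrect); apply Hrect.
  - intro E; apply Hinj in E; lia.
  - apply HNp; lia.
  - apply HNq; lia.
  - apply HNp; lia.
  - apply HNq; lia.
Qed.

Lemma gm_limit_unique (y : nat -> X) (p q : X) :
  (forall m n, y m = y n -> m = n) -> Un_cv (fun n => d (y n) (y (S n))) 0 ->
  gm_converges_to d y p -> gm_converges_to d y q -> p = q.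
Proof.
  intros Hinj Hstep Hp Hq; apply gm_eq_of_dist_le0.
  destruct (gm_rectangle_eventually y p q Hinj) as [N HN].
  apply (Rle_0_of_eventually_le_cv0 _ _ N HN).
  replace 0 with (0 + 0 + 0) by ring.
  apply CV_plus; [apply CV_plus; assumption|].
  exact (Un_cv_subseq _ S _ ltac:(intros; lia) Hq).
Qed.

End GeneralizedMetric.

Section Orbit.

Context {X : Type} {d : X -> X -> R} {T F : X -> X} {lambda : R}.
Hypothesis Hd : is_gen_metric d.
Hypothesis HTinj : forall x y, T x = T y -> x = y.
Hypothesis Hlambda : 0 <= lambda < 1/2.
Hypothesis Hcontr :
  forall x y, d (T (F x)) (T (F y)) <= lambda * (d (T x) (T (F x)) + d (T y) (T (F y))).

Lemma fixed_point_unique (z w : X) : F z = z -> F w = w -> z = w.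
Proof.
  intros Hz Hw; apply HTinj, (gm_eq_of_dist_le0 Hd).
  pose proof (Hcontr z w) as H; rewrite Hz, Hw, !(gm_dist_refl Hd) in H; lra.
Qed.

Lemma contraction_ratio_bounds : 0 <= lambda / (1 - lambda) < 1.
Proof.
  split; [apply Rmult_le_pos; [lra|apply Rlt_le, Rinv_0_lt_compat; lra]|].
  apply (Rmult_lt_reg_l (1 - lambda)); [lra|]; field_simplify; lra.
Qed.

Variable x0 : X.
Let orbit n := iter_map F n x0.
Let step n := d (T (orbit n)) (T (orbit (S n))).

Lemma orbit_succ (n : nat) : orbit (S n) = F (orbit n).
Proof. reflexivity. Qed.

Lemma orbit_step_contract (n : nat) : step (S n) <= lambda / (1 - lambda) * step n.
Proof.
  pose proof (Hcontr (orbit n) (orbit (S n))) as H.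
  apply (Rmult_le_reg_l (1 - lambda)); [lra|].
  replace ((1 - lambda) * (lambda / (1 - lambda) * step n)) with (lambda * step n)
    by (field; lra).
  unfold step; rewrite !orbit_succ in *; lra.
Qed.

Lemma orbit_step_cv0 : Un_cv step 0.
Proof.
  apply (Un_cv_geometric_decay _ _ contraction_ratio_bounds).
  - intro n; apply (gm_dist_ge0 Hd).
  - exact orbit_step_contract.
Qed.

Lemma orbit_T_cauchy : gm_cauchy d (fun n => T (orbit n)).
Proof.
  intros e He; destruct (orbit_step_cv0 e He) as [N HN]; exists (S N).
  intros [|n] [|m] Hn Hm; try lia.
  pose proof (Hcontr (orbit n) (orbit m)) as H.
  pose proof (HN n ltac:(lia)) as Hn'; pose proof (HN m ltac:(lia)) as Hm'.
  unfold R_dist, step in *; rewrite Rminus_0_r, Rabs_pos_eq in Hn', Hm'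
    by apply (gm_dist_ge0 Hd).
  rewrite !orbit_succ in *; nra.
Qed.

Lemma orbit_fixed_or_T_injective :
  (exists m, F (orbit m) = orbit m) \/ (forall m n, T (orbit m) = T (orbit n) -> m = n).
Proof.
  destruct (classic (exists m, step m = 0)) as [[m Hm]|Hnz].
  { left; exists m; apply HTinj; symmetry; apply Hd, Hm. }
  right.
  assert (Hpos : forall n, 0 < step n).
  { intro n; destruct (gm_dist_ge0 Hd (T (orbit n)) (T (orbit (S n)))) as [H|H];
      [exact H|exfalso; apply Hnz; eauto]. }
  pose proof contraction_ratio_bounds as Hk.
  assert (Hdec : forall n, step (S n) < step n).
  { intro n; pose proof (orbit_step_contract n); pose proof (Hpos n); nra. }
  intros m n E; apply (strictly_decreasing_injective step Hdec).
  apply HTinj in E; unfold step; rewrite !orbit_succ, E; reflexivity.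
Qed.

(* In a Branciari space a convergent subsequence does not control the whole sequence;
   the rectangle through y_m, y_{m+1} with m = phi n does the job instead. *)
Lemma orbit_subseq_limit_fixed (phi : nat -> nat) (z : X) :
  gm_continuous d T -> (forall m n, T (orbit m) = T (orbit n) -> m = n) ->
  (forall n m, (n < m)%nat -> (phi n < phi m)%nat) ->
  gm_converges_to d (fun n => orbit (phi n)) z -> F z = z.
Proof.
  intros HTcont Hinj Hphi Hz.
  set (D := d (T z) (T (F z))).
  destruct (gm_rectangle_eventually Hd _ (T z) (T (F z)) Hinj) as [N HN].
  assert (Hbound : forall m, (m >= N)%nat ->
    (1 - lambda) * D <= d (T (orbit m)) (T z) + (1 + lambda) * step m).
  { intros m Hm; specialize (HN m Hm); pose proof (Hcontr (orbit m) z) as H.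
    unfold step, D in *; rewrite !orbit_succ in *; lra. }
  assert (Hlim : Un_cv (fun n => d (T (orbit (phi n))) (T z) + (1 + lambda) * step (phi n)) 0).
  { replace 0 with (0 + (1 + lambda) * 0) by ring.
    apply CV_plus; [exact (HTcont _ _ Hz)|].
    apply CV_mult; [apply Un_cv_const|exact (Un_cv_subseq _ _ _ Hphi orbit_step_cv0)]. }
  assert (HD : (1 - lambda) * D <= 0).
  { refine (Rle_0_of_eventually_le_cv0 _ _ N _ Hlim).
    intros n Hn; apply Hbound; pose proof (strictly_increasing_ge_id phi Hphi n); lia. }
  symmetry; apply HTinj, (gm_eq_of_dist_le0 Hd).
  pose proof (gm_dist_ge0 Hd (T z) (T (F z))); fold D; nra.
Qed.

Lemma orbit_T_cv_fixed (z : X) : F z = z -> gm_converges_to d (fun n => T (orbit n)) (T z).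
Proof.
  intro Hz; apply (CV_shift _ 1).
  apply (Un_cv_0_squeeze _ (fun n => lambda * step n)).
  - intro n; rewrite Nat.add_1_r; split; [apply (gm_dist_ge0 Hd)|].
    pose proof (Hcontr (orbit n) z) as H; rewrite Hz, (gm_dist_refl Hd) in H.
    unfold step; rewrite !orbit_succ; lra.
  - rewrite <- (Rmult_0_r lambda); apply CV_mult; [apply Un_cv_const|exact orbit_step_cv0].
Qed.

Lemma orbit_cv_stationary (m : nat) :
  F (orbit m) = orbit m -> gm_converges_to d orbit (orbit m).
Proof.
  intro Hfix.
  assert (Hconst : forall n, orbit (n + m) = orbit m).
  { induction n as [|n IH]; [reflexivity|].
    change (F (orbit (n + m)) = orbit m); rewrite IH; exact Hfix. }
  apply (CV_shift _ m); intros e He; exists 0%nat; intros n _.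
  rewrite Hconst, (gm_dist_refl Hd); unfold R_dist; rewrite Rminus_0_r, Rabs_R0; exact He.
Qed.

Lemma fixed_point_exists :
  gm_complete d -> gm_continuous d T -> subseq_convergent_map d T -> exists z, F z = z.
Proof.
  intros Hcomplete HTcont HTsub.
  destruct orbit_fixed_or_T_injective as [[m Hm]|Hinj]; [eauto|].
  destruct (HTsub _ (Hcomplete _ orbit_T_cauchy)) as [phi [Hphi [z Hz]]].
  exists z; exact (orbit_subseq_limit_fixed phi z HTcont Hinj Hphi Hz).
Qed.

Lemma orbit_cv_fixed_point (z : X) :
  gm_continuous d T -> seq_convergent_map d T -> F z = z -> gm_converges_to d orbit z.
Proof.
  intros HTcont HTseq Hz.
  destruct orbit_fixed_or_T_injective as [[m Hm]|Hinj].
  { rewrite <- (fixed_point_unique _ _ Hm Hz); exact (orbit_cv_stationary m Hm). }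
  pose proof (orbit_T_cv_fixed z Hz) as HTz.
  destruct (HTseq _ (ex_intro _ _ HTz)) as [w Hw].
  assert (Hwz : T w = T z)
    by exact (gm_limit_unique Hd _ _ _ Hinj orbit_step_cv0 (HTcont _ _ Hw) HTz).
  apply HTinj in Hwz; subst w; exact Hw.
Qed.

End Orbit.

Theorem theorem2p4 (X : Type) (d : X -> X -> R) (T S : X -> X) (lambda : R) :
  inhabited X -> is_gen_metric d -> gm_complete d ->
  gm_continuous d T -> (forall x y, T x = T y -> x = y) ->
  subseq_convergent_map d T ->
  0 <= lambda -> lambda < 1/2 ->
  (forall x y, d (T (S x)) (T (S y)) <= lambda * (d (T x) (T (S x)) + d (T y) (T (S y)))) ->
  (exists! z, S z = z) /\
  (seq_convergent_map d T ->
     forall z, S z = z -> forall x0, gm_converges_to d (fun n => iter_map S n x0) z).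
Proof.
  intros [x0] Hd Hcomplete HTcont HTinj HTsub Hl0 Hl1 Hcontr.
  assert (Hl : 0 <= lambda < 1/2) by lra.
  split.
  - destruct (fixed_point_exists Hd HTinj Hl Hcontr x0 Hcomplete HTcont HTsub) as [z Hz].
    exists z; split; [exact Hz|].
    intros w Hw; exact (fixed_point_unique Hd HTinj Hcontr z w Hz Hw).
  - intros HTseq z Hz x1.
    exact (orbit_cv_fixed_point Hd HTinj Hl Hcontr x1 z HTcont HTseq Hz).
Qed.
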